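(* On the triangle graph on $X=\{0,1,2\}$ over $\mathbb{F}_2$ with exterior algebra $\Omega_{min}=\Omega(\mathbb{Z}_3)$, the unique quantum metric $g=e^+\otimes e^-+e^-\otimes e^+$ has exactly four QLCs, given by $\nabla e^+=\alpha\, e^-\otimes e^-$, $\nabla e^-=\beta\, e^+\otimes e^+$ for $\alpha,\beta\in\{0,1\}$. These have curvature $R_\nabla e^\pm=\alpha\beta\,\mathrm{Vol}\otimes e^\pm$, Ricci tensors ${\rm Ricci}_+=\alpha\beta\, e^-\otimes e^+$, ${\rm Ricci}_-=\alpha\beta\, e^+\otimes e^-$ (for the lifts $i_+$, $i_-$ respectively) and Ricci scalars $S_\pm=\alpha\beta$.
   Context: $A=\mathbb{F}_2(\mathbb{Z}_3)$, functions on $\{0,1,2\}$; $(R_\pm f)(i)=f(i\pm1)$ mod 3. The calculus of the triangle graph (all arrows $i\to i\pm1$) has left-invariant basis $e^+=\sum_i i\to i+1$, $e^-=\sum_i i\to i-1$ over $A$, with $e^\pm f=(R_\pm f)e^\pm$ and ${\rm d} f=(R_+f+f)e^++(R_-f+f)e^-$. $\Omega^1\otimes_A\Omega^1$ is free with basis $e^a\otimes e^b$. $\Omega(\mathbb{Z}_3)$ is the exterior algebra generated by $A$ and $e^\pm$ with the additional relations $(e^\pm)^2=0$, $e^+\wedge e^-+e^-\wedge e^+=0$, ${\rm d} e^\pm=0$; $\Omega^2$ is spanned over $A$ by $\mathrm{Vol}=e^+\wedge e^-$. A bimodule connection is a linear $\nabla:\Omega^1\to\Omega^1\otimes_A\Omega^1$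 with $\nabla(f\omega)={\rm d} f\otimes\omega+f\nabla\omega$ and $\nabla(\omega f)=(\nabla\omega)f+\sigma(\omega\otimes{\rm d} f)$ for a bimodule map $\sigma$; it is a QLC if torsion $T_\nabla=\wedge\nabla-{\rm d}$ vanishes and $(\nabla\otimes\mathrm{id}+(\sigma\otimes\mathrm{id})(\mathrm{id}\otimes\nabla))g=0$. Curvature $R_\nabla=({\rm d}\otimes\mathrm{id}-(\wedge\otimes\mathrm{id})(\mathrm{id}\otimes\nabla))\nabla$. Inverse metric: the bimodule map with $(e^\pm,e^\mp)=1$, $(e^\pm,e^\pm)=0$. Lifts $i_\pm:\Omega^2\to\Omega^1\otimes_A\Omega^1$ are the bimodule maps with $i_\pm(\mathrm{Vol})=e^\pm\otimes e^\mp$; ${\rm Ricci}_\pm=((\ ,\ )\otimes\mathrm{id})(\mathrm{id}\otimes(i_\pm\otimes\mathrm{id})R_\nabla)g$ and $S_\pm=(\ ,\ ){\rm Ricci}_\pm$. *)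

From HB Require Import structures.
From mathcomp Require Import all_boot all_order all_algebra.
Set Implicit Arguments. Unset Strict Implicit. Unset Printing Implicit Defensive.
Import GRing.Theory.
Local Open Scope ring_scope.

Definition A := {ffun 'Z_3 -> 'F_2}.
Definition cst (c : 'F_2) : A := [ffun _ => c].
Definition amul (f g : A) : A := [ffun i => f i * g i].

Definition shift (s : bool) (f : A) : A :=
  [ffun i : 'Z_3 => f (if s then i + 1 else i - 1)].

(* Index convention: true = "+", false = "-".
   Omega^1 is free as a left A-module on e^+, e^-; an element is the
   coefficient function a |-> omega_a, meaning sum_a omega_a e^a.
   Omega^1 (x)_A Omega^1 (etc.) is free on e^a (x) e^b (etc.).
   Omega^2 is free on Vol = e^+ /\ e^-; Omega^2 (x)_A Omega^1 is free on
   Vol (x) e^c. *)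
Definition Om1 := {ffun bool -> A}.
Definition Om2 := A.
Definition Om11 := {ffun bool * bool -> A}.
Definition Om111 := {ffun bool * bool * bool -> A}.
Definition Om1111 := {ffun bool * bool * bool * bool -> A}.
Definition Om21 := {ffun bool -> A}.

Definition e (s : bool) : Om1 := [ffun a => cst (if a == s then 1 else 0)].
Definition ee (s t : bool) : Om11 :=
  [ffun ab => cst (if ab == (s, t) then 1 else 0)].

(* bimodule structures: left action is coefficientwise, right action uses
   e^a f = (R_a f) e^a *)
Definition lact1 (f : A) (w : Om1) : Om1 := [ffun a => amul f (w a)].
Definition ract1 (w : Om1) (f : A) : Om1 := [ffun a => amul (w a) (shift a f)].
Definition lact2 (f : A) (T : Om11) : Om11 := [ffun ab => amul f (T ab)].
Definition ract2 (T : Om11) (f : A) : Om11 :=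
  [ffun ab => amul (T ab) (shift ab.1 (shift ab.2 f))].

Definition d0 (f : A) : Om1 := [ffun a => shift a f + f].

(* tensor products over A, computed with e^a f = (R_a f) e^a *)
Definition tens11 (w v : Om1) : Om11 :=
  [ffun ab => amul (w ab.1) (shift ab.1 (v ab.2))].
Definition tens21 (T : Om11) (v : Om1) : Om111 :=
  [ffun abc => amul (T abc.1) (shift abc.1.1 (shift abc.1.2 (v abc.2)))].
Definition tens12 (w : Om1) (T : Om11) : Om111 :=
  [ffun abc => amul (w abc.1.1) (shift abc.1.1 (T (abc.1.2, abc.2)))].
Definition tens13 (w : Om1) (X : Om111) : Om1111 :=
  [ffun abcd => amul (w abcd.1.1.1)
                  (shift abcd.1.1.1 (X (abcd.1.1.2, abcd.1.2, abcd.2)))].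
(* (kappa Vol) (x) v, using Vol f = e^+ e^- f = (R_+ R_- f) Vol *)
Definition tens2_1 (k : Om2) (v : Om1) : Om21 :=
  [ffun c => amul k (shift true (shift false (v c)))].

(* wedge: (e^±)^2 = 0, e^+ /\ e^- = Vol, e^- /\ e^+ = - Vol *)
Definition wedge (T : Om11) : Om2 := T (true, false) - T (false, true).
(* d on Omega^1: d(f e^a) = d f /\ e^a  (since d e^a = 0) *)
Definition d1 (w : Om1) : Om2 := \sum_(a : bool) wedge (tens11 (d0 (w a)) (e a)).

Definition wedge_id (X : Om111) : Om21 :=
  [ffun c => X (true, false, c) - X (false, true, c)].

(* sigma (x) id, using X = sum_c (sum_ab X_abc e^a(x)e^b) (x) e^c *)
Definition sigma_id (sigma : Om11 -> Om11) (X : Om111) : Om111 :=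
  \sum_(c : bool) tens21 (sigma [ffun ab => X (ab.1, ab.2, c)]) (e c).

(* For T in Omega^1(x)Omega^1 written as T = sum_ab (T_ab e^a) (x) e^b,
   apply an operation F defined on simple tensors xi (x) eta. *)
Definition apply11 (X : zmodType) (F : Om1 -> Om1 -> X) (T : Om11) : X :=
  \sum_(a : bool) \sum_(b : bool) F (lact1 (T (a, b)) (e a)) (e b).

Definition is_bimod_map (sigma : Om11 -> Om11) : Prop :=
  (forall x y, sigma (x + y) = sigma x + sigma y) /\
  (forall f x, sigma (lact2 f x) = lact2 f (sigma x)) /\
  (forall f x, sigma (ract2 x f) = ract2 (sigma x) f).

Definition is_bimod_map_A (ip : Om11 -> A) : Prop :=
  (forall x y, ip (x + y) = ip x + ip y) /\
  (forall f x, ip (lact2 f x) = amul f (ip x)) /\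
  (forall f x, ip (ract2 x f) = amul (ip x) f).

(* Quantum metric: g with a bimodule inverse ( , ) such that
   ((w, g^1) g^2 = w = g^1 (g^2, w), and quantum symmetric: /\(g) = 0. *)
Definition is_quantum_metric (g : Om11) : Prop :=
  wedge g = 0 /\
  exists ip : Om11 -> A, is_bimod_map_A ip /\
    (forall w : Om1, apply11 (fun xi eta => lact1 (ip (tens11 w xi)) eta) g = w) /\
    (forall w : Om1, apply11 (fun xi eta => ract1 xi (ip (tens11 eta w))) g = w).

Definition gmet : Om11 := ee true false + ee false true.

Definition ipc (a b : bool) : A := cst (if a != b then 1 else 0).
Definition ip (T : Om11) : A := \sum_(a : bool) \sum_(b : bool) amul (T (a, b)) (ipc a b).
Definition ip_id (X : Om1111) : Om11 :=
  [ffun cd => ip [ffun ab => X (ab.1, ab.2, cd.1, cd.2)]].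

Definition is_bimod_conn (nabla : Om1 -> Om11) (sigma : Om11 -> Om11) : Prop :=
  (forall w v, nabla (w + v) = nabla w + nabla v) /\
  (forall f w, nabla (lact1 f w) = tens11 (d0 f) w + lact2 f (nabla w)) /\
  (forall f w, nabla (ract1 w f) = ract2 (nabla w) f + sigma (tens11 w (d0 f))).

Definition torsion (nabla : Om1 -> Om11) (w : Om1) : Om2 := wedge (nabla w) - d1 w.

(* (nabla (x) id + (sigma (x) id)(id (x) nabla)) g *)
Definition metric_compat_term (nabla : Om1 -> Om11) (sigma : Om11 -> Om11)
  (g : Om11) : Om111 :=
  apply11 (fun xi eta => tens21 (nabla xi) eta + sigma_id sigma (tens12 xi (nabla eta))) g.

Definition is_QLC (nabla : Om1 -> Om11) (g : Om11) : Prop :=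
  exists sigma, is_bimod_map sigma /\ is_bimod_conn nabla sigma /\
    (forall w, torsion nabla w = 0) /\ metric_compat_term nabla sigma g = 0.

(* Curvature R = (d (x) id - (wedge (x) id)(id (x) nabla)) nabla *)
Definition curvature (nabla : Om1 -> Om11) (w : Om1) : Om21 :=
  apply11 (fun xi eta => tens2_1 (d1 xi) eta - wedge_id (tens12 xi (nabla eta)))
    (nabla w).

Definition ilift (s : bool) (k : Om2) : Om11 := lact2 k (ee s (~~ s)).
Definition ilift_id (s : bool) (Y : Om21) : Om111 :=
  \sum_(c : bool) tens21 (ilift s (Y c)) (e c).

(* Ricci_± = (( , ) (x) id)(id (x) (i_± (x) id) R) g, S_± = ( , ) Ricci_± *)
Definition Ricci (s : bool) (nabla : Om1 -> Om11) (g : Om11) : Om11 :=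
  ip_id (apply11 (fun xi eta => tens13 xi (ilift_id s (curvature nabla eta))) g).
Definition Rscalar (s : bool) (nabla : Om1 -> Om11) (g : Om11) : A :=
  ip (Ricci s nabla g).

(* A bimodule connection is determined by its Christoffel symbols Gamma^a = nabla e^a
   (left Leibniz rule), and the right Leibniz rule evaluated on delta functions expresses
   sigma through them too.  Metric compatibility thus becomes a system of equations over
   F_2 in the Gamma^a alone; its solutions are Gamma^+ = alpha e^- (x) e^- and
   Gamma^- = beta e^+ (x) e^+ with alpha, beta invariant under translation on Z_3, hence
   constant, and conversely these are QLCs for sigma the flip.  The metric is unique since
   a bimodule map to A must kill e^c (x) e^c, translation by 2 having no fixed point on Z_3,
   so the inverse-metric equations pin down every coefficient of g. *)

From mathcomp Require Import all_boot all_order all_algebra.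
From mathcomp Require Import ring.
Set Implicit Arguments. Unset Strict Implicit. Unset Printing Implicit Defensive.
Import GRing.Theory.
Local Open Scope ring_scope.

Lemma F2_cases (x : 'F_2) : x = 0 \/ x = 1.
Proof. by case: x => [[|[|//]]] ?; [left|right]; apply: val_inj. Qed.

Lemma oppr_F2 (x : 'F_2) : - x = x.
Proof. exact: (oppr_pchar2 (pchar_Fp (isT : prime 2))). Qed.

Lemma addrr_F2 (x : 'F_2) : x + x = 0.
Proof. exact: (addrr_pchar2 (pchar_Fp (isT : prime 2))). Qed.

Lemma Z3_cases (i : 'Z_3) : [\/ i = 0, i = 1 | i = -1].
Proof.
by case: i => [[|[|[|//]]] ?]; [apply: Or31|apply: Or32|apply: Or33]; apply: val_inj.
Qed.

Section Z3Arith.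
Variable i : 'Z_3.
Lemma Z3_add11 : i + 1 + 1 = i - 1. Proof. by case: (Z3_cases i) => ->; apply/eqP. Qed.
Lemma Z3_sub11 : i - 1 - 1 = i + 1. Proof. by case: (Z3_cases i) => ->; apply/eqP. Qed.
Lemma Z3_add1_eq : (i + 1 == i) = false. Proof. by case: (Z3_cases i) => ->. Qed.
Lemma Z3_sub1_eq : (i - 1 == i) = false. Proof. by case: (Z3_cases i) => ->. Qed.
Lemma Z3_eq_add1 : (i == i + 1) = false. Proof. by case: (Z3_cases i) => ->. Qed.
Lemma Z3_eq_sub1 : (i == i - 1) = false. Proof. by case: (Z3_cases i) => ->. Qed.
Lemma Z3_add1_sub1 : (i + 1 == i - 1) = false. Proof. by case: (Z3_cases i) => ->. Qed.
Lemma Z3_sub1_add1 : (i - 1 == i + 1) = false. Proof. by case: (Z3_cases i) => ->. Qed.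
End Z3Arith.

Definition Z3E := (Z3_add11, Z3_sub11, addrK, subrK, Z3_add1_eq, Z3_sub1_eq,
  Z3_eq_add1, Z3_eq_sub1, Z3_add1_sub1, Z3_sub1_add1, eqxx).

Lemma Zp_shift_invariant n T (f : 'Z_n -> T) :
  (forall i, f (i + 1) = f i) -> forall i, f i = f 0.
Proof.
move=> f1 i; rewrite -[i]natr_Zp; elim: (nat_of_ord i) => [|k IHk] //.
by rewrite -addn1 natrD f1.
Qed.

Ltac coord_simpl :=
  do 3 rewrite ?ffunE ?sum_ffunE ?big_bool /=; rewrite ?Z3E /=.

Ltac F2_split := repeat match goal with |- context [@fun_of_fin ?aT ?rT ?ph ?T ?i] =>
  case: (F2_cases (@fun_of_fin aT rT ph T i)) => -> end.

(* Decides a goal over F_2, possibly with F_2 equations as premises, by enumerating the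
   values of every coefficient occurring in it. *)
Ltac F2_decide := F2_split;
  repeat (let H := fresh in move=> /eqP H; try by []; clear H); by apply/eqP.

(* [shift s f i = f (i + step s)] *)
Definition step (s : bool) : 'Z_3 := if s then 1 else -1.

Definition delta (p : 'Z_3) : A := [ffun j => (j == p)%:R].

(* In characteristic 2, writing d with a minus sign turns the Leibniz rules into ring
   identities. *)
Lemma d0E (f : A) : d0 f = [ffun a => shift a f - f].
Proof. by apply/ffunP => a; apply/ffunP => i; rewrite !ffunE oppr_F2. Qed.

Lemma Om1_decomp (w : Om1) : w = lact1 (w true) (e true) + lact1 (w false) (e false).
Proof. by apply/ffunP => -[]; apply/ffunP => i; rewrite /e /cst; coord_simpl; ring. Qed.

Lemma Om11_decomp (X : Om11) :
  X = lact2 (X (true, true)) (ee true true) + lact2 (X (true, false)) (ee true false)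
    + (lact2 (X (false, true)) (ee false true) + lact2 (X (false, false)) (ee false false)).
Proof. by apply/ffunP => -[[] []]; apply/ffunP => i; rewrite /ee /cst; coord_simpl; ring. Qed.

Lemma ract1_e a f : ract1 (e a) f = lact1 (shift a f) (e a).
Proof.
by apply/ffunP => x; apply/ffunP => i; rewrite /e /cst; case: x; case: a; coord_simpl; ring.
Qed.

Lemma ract2_ee a b f : ract2 (ee a b) f = lact2 (shift a (shift b f)) (ee a b).
Proof.
by apply/ffunP => -[x y]; apply/ffunP => i; rewrite /ee /cst; coord_simpl;
  case: eqP => [[-> ->]|_]; ring.
Qed.

Lemma tens11_e_lact1 c a f : tens11 (e c) (lact1 f (e a)) = lact2 (shift c f) (ee c a).
Proof.
by apply/ffunP => -[x y]; apply/ffunP => i; rewrite /ee /e /cst;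
  case: x; case: y; case: c; case: a; coord_simpl; ring.
Qed.

Lemma bimod_map_A_diag (ipm : Om11 -> A) : is_bimod_map_A ipm -> forall c, ipm (ee c c) = 0.
Proof.
case=> _ [ipL ipR] c; apply/ffunP => i.
have := ipR (delta i) (ee c c); rewrite ract2_ee ipL => /(congr1 (fun T : A => T i)).
by case: c; coord_simpl; rewrite mul0r mulr1 => <-.
Qed.

Lemma ip_bimod_map : is_bimod_map_A ip.
Proof.
by split; [|split] => f x; apply/ffunP => i; rewrite /ip /ipc /cst /amul; coord_simpl; ring.
Qed.

Lemma gmet_quantum_metric : is_quantum_metric gmet.
Proof.
split; first by apply/ffunP => i; rewrite /wedge /gmet /ee /cst; coord_simpl; ring.
exists ip; split; first exact: ip_bimod_map.
by split => w; apply/ffunP => c; apply/ffunP => i;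
  rewrite /apply11 /ip /gmet /ipc /cst /e /ee; case: c; coord_simpl; ring.
Qed.

Lemma quantum_metric_gmet g : is_quantum_metric g -> g = gmet.
Proof.
case=> _ [ipm [ipB [inv_g _]]]; have ip_diag := bimod_map_A_diag ipB.
case: ipB => _ [ipL _].
have coord c b i : g (~~ c, b) (i + step c) * ipm (ee c (~~ c)) i = (c == b)%:R.
  have := congr1 (fun w : Om1 => w b i) (inv_g (e c)); rewrite /apply11 /=.
  under eq_bigr do under eq_bigr do rewrite tens11_e_lact1 ipL.
  rewrite /e /cst /step; coord_simpl.
  by case: c; case: b; coord_simpl; rewrite ip_diag; coord_simpl => H; apply: etrans H; ring.
apply/ffunP => -[x y]; apply/ffunP => j.
have := coord (~~ x) y (j - step (~~ x)); have := coord (~~ x) (~~ y) (j - step (~~ x)).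
rewrite negbK !subrK /gmet /ee /cst.
by case: x; case: y; coord_simpl; F2_decide.
Qed.

Lemma additive_map0 (U V : zmodType) (f : U -> V) :
  (forall x y, f (x + y) = f x + f y) -> f 0 = 0.
Proof. by move=> fD; apply: (addrI (f 0)); rewrite -fD !addr0. Qed.

Definition conn_of (G : bool -> Om11) (w : Om1) : Om11 :=
  \sum_(a : bool) (tens11 (d0 (w a)) (e a) + lact2 (w a) (G a)).

Lemma bimod_conn_decomp nabla sigma :
  is_bimod_conn nabla sigma -> forall w, nabla w = conn_of (fun a => nabla (e a)) w.
Proof. by case=> nD [nL _] w; rewrite {1}(Om1_decomp w) nD !nL /conn_of big_bool. Qed.

Lemma bimod_conn_eq nabla1 sigma1 nabla2 sigma2 :
  is_bimod_conn nabla1 sigma1 -> is_bimod_conn nabla2 sigma2 ->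
  nabla1 (e true) = nabla2 (e true) -> nabla1 (e false) = nabla2 (e false) ->
  forall w, nabla1 w = nabla2 w.
Proof.
move=> C1 C2 E1 E2 w.
by rewrite (bimod_conn_decomp C1) (bimod_conn_decomp C2) /conn_of !big_bool E1 E2.
Qed.

Lemma conn_of_e G a : conn_of G (e a) = G a.
Proof.
apply/ffunP => -[c d]; apply/ffunP => i; rewrite /conn_of /d0 /e /cst.
by case: a; coord_simpl; rewrite !addrr_F2; ring.
Qed.

Lemma bimod_map_coord sigma : is_bimod_map sigma -> forall X c d i,
  sigma X (c, d) i = \sum_(a : bool) \sum_(b : bool) X (a, b) i * sigma (ee a b) (c, d) i.
Proof. by case=> sD [sL _] X c d i; rewrite {1}(Om11_decomp X) !sD !sL; coord_simpl. Qed.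

Lemma bimod_conn_sigma_ee nabla sigma : is_bimod_map sigma -> is_bimod_conn nabla sigma ->
  forall a y c d i, sigma (ee a y) (c, d) i =
    ((d == a) && (c == y))%:R + nabla (e a) (c, d) i * (step c + step d == step a + step y)%:R.
Proof.
move=> sB [_ [nL nR]] a y c d i.
have := nR (delta (i + step a + step y)) (e a).
rewrite ract1_e nL => /(congr1 (fun T : Om11 => T (c, d) i)).
coord_simpl; rewrite (bimod_map_coord sB (tens11 _ _)) /d0 /delta /e /cst /step.
by case: a; case: y; case: c; case: d; coord_simpl; F2_decide.
Qed.

Lemma lact1_gmet_e a b : lact1 (gmet (a, b)) (e a) = if a != b then e a else 0.
Proof.
apply/ffunP => x; apply/ffunP => i; rewrite /gmet /e /ee /cst.
by case: a; case: b; case: x; coord_simpl; ring.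
Qed.

Lemma apply11_gmet (X : zmodType) (F : Om1 -> Om1 -> X) :
  (forall b, F 0 (e b) = 0) -> apply11 F gmet = F (e true) (e false) + F (e false) (e true).
Proof. by move=> F0; rewrite /apply11 !big_bool !lact1_gmet_e /= !F0 add0r addr0. Qed.

Lemma tens21_0 v : tens21 0 v = 0.
Proof. by apply/ffunP => x; apply/ffunP => i; coord_simpl; ring. Qed.

Lemma tens12_0 T : tens12 0 T = 0.
Proof. by apply/ffunP => x; apply/ffunP => i; coord_simpl; ring. Qed.

Lemma sigma_id_0 sigma : is_bimod_map sigma -> sigma_id sigma 0 = 0.
Proof.
case=> sD _; rewrite /sigma_id big1 // => c _.
have -> : [ffun ab : bool * bool => (0 : Om111) (ab.1, ab.2, c)] = 0.
  by apply/ffunP => x; rewrite !ffunE.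
by rewrite (additive_map0 sD) tens21_0.
Qed.

Lemma metric_compat_coord nabla sigma : is_bimod_map sigma -> is_bimod_conn nabla sigma ->
  metric_compat_term nabla sigma gmet = 0 -> forall x y z i,
  nabla (e (~~ z)) (x, y) i + \sum_(a : bool) \sum_(b : bool)
    nabla (e (~~ a)) (b, z) (i + step a) * sigma (ee a b) (x, y) i = 0.
Proof.
move=> sB [nD _]; rewrite /metric_compat_term apply11_gmet => [MC x y z i|b]; last first.
  by rewrite (additive_map0 nD) tens21_0 tens12_0 (sigma_id_0 sB) addr0.
move/(congr1 (fun X : Om111 => X (x, y, z) i)): MC; coord_simpl.
rewrite !(bimod_map_coord sB (finfun _)) /step; coord_simpl.
by case: z; coord_simpl => H; apply: etrans H; ring.
Qed.

Definition christoffel (al be : 'F_2) (a : bool) : Om11 :=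
  if a then lact2 (cst al) (ee false false) else lact2 (cst be) (ee true true).

Lemma d1_e a : d1 (e a) = 0.
Proof.
apply/ffunP => i; rewrite /d1 /wedge /d0 /e /cst.
by case: a; coord_simpl; rewrite ?addrr_F2; ring.
Qed.

Lemma d1_cst_e k a : d1 (lact1 (cst k) (e a)) = 0.
Proof.
apply/ffunP => i; rewrite /d1 !big_bool !d0E /wedge /e /cst.
by case: a; coord_simpl; ring.
Qed.

Lemma wedge_eq0_sym T : wedge T = 0 -> T (true, false) = T (false, true).
Proof. exact: subr0_eq. Qed.

Section Classification.

Variables (nabla : Om1 -> Om11) (sigma : Om11 -> Om11).
Hypotheses (sB : is_bimod_map sigma) (nC : is_bimod_conn nabla sigma).
Hypotheses (tors0 : forall w, torsion nabla w = 0).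
Hypothesis (compat : metric_compat_term nabla sigma gmet = 0).

Local Notation Gamma a := (nabla (e a)).

Lemma Gamma_sym a : Gamma a (true, false) = Gamma a (false, true).
Proof. by apply: wedge_eq0_sym; rewrite -(tors0 (e a)) /torsion d1_e subr0. Qed.

Lemma Gamma_compat x y z i :
  Gamma (~~ z) (x, y) i + \sum_(a : bool) \sum_(b : bool) Gamma (~~ a) (b, z) (i + step a) *
    (((y == a) && (x == b))%:R + Gamma a (x, y) i * (step x + step y == step a + step b)%:R)
  = 0.
Proof.
rewrite -[RHS](metric_compat_coord sB nC compat x y z i); congr (_ + _).
by apply: eq_bigr => a _; apply: eq_bigr => b _; rewrite (bimod_conn_sigma_ee sB nC).
Qed.

Lemma Gamma_diag a i : Gamma a (a, a) i = 0.
Proof.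
have := Gamma_compat a a (~~ a) i; rewrite negbK !big_bool /step.
by case: a; coord_simpl; F2_decide.
Qed.

Lemma Gamma_cross a i : Gamma a (~~ a, a) i = 0.
Proof.
have := Gamma_compat (~~ a) (~~ a) a (i + step a); rewrite !big_bool /step.
by case: a; coord_simpl; F2_decide.
Qed.

Lemma Gamma_opp_shift a i : Gamma a (~~ a, ~~ a) (i + step a) = Gamma a (~~ a, ~~ a) i.
Proof.
have := Gamma_compat (~~ a) (~~ a) (~~ a) (i + step a); rewrite negbK !big_bool /step.
by case: a; coord_simpl; rewrite !Gamma_diag; F2_decide.
Qed.

Lemma Gamma_opp_const a i : Gamma a (~~ a, ~~ a) i = Gamma a (~~ a, ~~ a) 0.
Proof.
case: a; apply: Zp_shift_invariant => j; first exact: (Gamma_opp_shift true).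
by rewrite -(Gamma_opp_shift false (j + 1)) /step addrK.
Qed.

Lemma QLC_christoffel a :
  Gamma a = christoffel (Gamma true (false, false) 0) (Gamma false (true, true) 0) a.
Proof.
apply/ffunP => -[c d]; apply/ffunP => i; rewrite /christoffel /ee /cst.
case: a; case: c; case: d; coord_simpl; rewrite ?mulr0 ?mulr1.
- exact: (Gamma_diag true).
- by rewrite Gamma_sym (Gamma_cross true).
- exact: (Gamma_cross true).
- exact: (Gamma_opp_const true).
- exact: (Gamma_opp_const false).
- exact: (Gamma_cross false).
- by rewrite -Gamma_sym (Gamma_cross false).
- exact: (Gamma_diag false).
Qed.

End Classification.

Definition flip (X : Om11) : Om11 := [ffun cd => X (cd.2, cd.1)].

Lemma flip_bimod_map : is_bimod_map flip.
Proof.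
split; [|split] => [x y|f x|f x]; apply/ffunP => -[c d]; apply/ffunP => i; rewrite /amul //.
- by coord_simpl.
- by coord_simpl.
- by case: c; case: d; coord_simpl.
Qed.

Section Existence.

Variables al be : 'F_2.

Local Notation nabla := (conn_of (christoffel al be)).

Lemma christoffel_bimod_conn : is_bimod_conn nabla flip.
Proof.
split; [|split] => [w v|f w|f w]; apply/ffunP => -[c d]; apply/ffunP => i;
  rewrite /conn_of !big_bool /christoffel !d0E /e /ee /cst /amul;
  case: c; case: d; coord_simpl; ring.
Qed.

Lemma christoffel_torsion_free w : torsion nabla w = 0.
Proof.
apply/ffunP => i; rewrite /torsion /wedge /d1 /conn_of /christoffel /d0 /e /ee /cst /amul.
by coord_simpl; ring.
Qed.

Lemma christoffel_metric_compat : metric_compat_term nabla flip gmet = 0.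
Proof.
rewrite /metric_compat_term apply11_gmet => [|b]; last first.
  rewrite (additive_map0 (proj1 christoffel_bimod_conn)) tens21_0 tens12_0.
  by rewrite (sigma_id_0 flip_bimod_map) addr0.
rewrite !conn_of_e; apply/ffunP => -[[x y] z]; apply/ffunP => i.
rewrite /sigma_id /christoffel /flip /e /ee /cst; coord_simpl.
by case: (F2_cases al) => ->; case: (F2_cases be) => ->;
  case: x; case: y; case: z; coord_simpl; apply/eqP.
Qed.

Lemma christoffel_QLC : is_QLC nabla gmet.
Proof.
exists flip; split; first exact: flip_bimod_map.
split; first exact: christoffel_bimod_conn.
by split; [exact: christoffel_torsion_free | exact: christoffel_metric_compat].
Qed.

End Existence.

Lemma lact2_cst_ee k p q a b :
  lact2 (cst k) (ee p q) (a, b) = cst (k * ((a, b) == (p, q))%:R).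
Proof. by apply/ffunP => i; rewrite /ee /cst; coord_simpl; case: eqP. Qed.

Lemma tens2_1_0 v : tens2_1 0 v = 0.
Proof. by apply/ffunP => c; apply/ffunP => i; coord_simpl; ring. Qed.

Lemma wedge_id_tens12_cst k m a p q :
  wedge_id (tens12 (lact1 (cst k) (e a)) (lact2 (cst m) (ee p q))) =
  lact1 (cst (k * m * (((a, p) == (true, false))%:R - ((a, p) == (false, true))%:R))) (e q).
Proof.
apply/ffunP => c; apply/ffunP => i; rewrite /e /ee /cst.
by case: a; case: p; case: q; case: c; coord_simpl; ring.
Qed.

Lemma ilift_id_cst_e s k b :
  ilift_id s (lact1 (cst k) (e b)) = [ffun xyz => cst (k * (xyz == (s, ~~ s, b))%:R)].
Proof.
apply/ffunP => -[[x y] z]; apply/ffunP => i; rewrite /ilift_id /ilift /e /ee /cst.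
by case: s; case: b; case: x; case: y; case: z; coord_simpl; ring.
Qed.

Lemma tens13_e_cst a (f : bool * bool * bool -> 'F_2) :
  tens13 (e a) [ffun xyz => cst (f xyz)] =
  [ffun abcd => cst ((abcd.1.1.1 == a)%:R * f (abcd.1.1.2, abcd.1.2, abcd.2))].
Proof.
by apply/ffunP => -[[[x y] z] w]; apply/ffunP => i; rewrite /e /cst; coord_simpl; case: eqP.
Qed.

Lemma tens13_0 X : tens13 0 X = 0.
Proof. by apply/ffunP => x; apply/ffunP => i; coord_simpl; ring. Qed.

Lemma ip_cst_ee k p q : ip (lact2 (cst k) (ee p q)) = cst (k * (p != q)%:R).
Proof.
by apply/ffunP => i; rewrite /ip /ipc /ee /cst; case: p; case: q; coord_simpl; ring.
Qed.

Section Curvature.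

Variables (nabla : Om1 -> Om11) (al be : 'F_2).
Hypothesis nabla_e : forall a, nabla (e a) = christoffel al be a.

Lemma christoffel_curvature s : curvature nabla (e s) = lact1 (cst (al * be)) (e s).
Proof.
rewrite /curvature /apply11 !big_bool !nabla_e.
case: s; rewrite /= !lact2_cst_ee /= !d1_cst_e !tens2_1_0 !wedge_id_tens12_cst /=.
all: apply/ffunP => c; apply/ffunP => i; rewrite /e /cst; coord_simpl.
all: by case: (F2_cases al) => ->; case: (F2_cases be) => ->; case: c; coord_simpl; apply/eqP.
Qed.

Lemma christoffel_Ricci s : Ricci s nabla gmet = lact2 (cst (al * be)) (ee (~~ s) s).
Proof.
rewrite /Ricci apply11_gmet => [|b]; last exact: tens13_0.
rewrite !christoffel_curvature !ilift_id_cst_e !tens13_e_cst.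
apply/ffunP => -[c d]; apply/ffunP => i; rewrite /ip_id /ip /ipc /ee /cst; coord_simpl.
by case: (F2_cases al) => ->; case: (F2_cases be) => ->;
  case: s; case: c; case: d; coord_simpl; apply/eqP.
Qed.

Lemma christoffel_Rscalar s : Rscalar s nabla gmet = cst (al * be).
Proof. by rewrite /Rscalar christoffel_Ricci ip_cst_ee; case: s; rewrite /= mulr1. Qed.

End Curvature.

Theorem proposition4p4 :
  (* g is the unique quantum metric *)
  (forall g' : Om11, is_quantum_metric g' <-> g' = gmet) /\
  (* every QLC is of the stated form *)
  (forall nabla, is_QLC nabla gmet ->
     exists alpha beta : 'F_2,
       nabla (e true) = lact2 (cst alpha) (ee false false) /\
       nabla (e false) = lact2 (cst beta) (ee true true)) /\
  (* each of the four forms is realised by a QLC *)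
  (forall alpha beta : 'F_2, exists nabla, is_QLC nabla gmet /\
       nabla (e true) = lact2 (cst alpha) (ee false false) /\
       nabla (e false) = lact2 (cst beta) (ee true true)) /\
  (* a QLC is determined by its values on e^+, e^- (so there are exactly four) *)
  (forall nabla1 nabla2, is_QLC nabla1 gmet -> is_QLC nabla2 gmet ->
     nabla1 (e true) = nabla2 (e true) -> nabla1 (e false) = nabla2 (e false) ->
     forall w, nabla1 w = nabla2 w) /\
  (* curvature, Ricci tensors and Ricci scalars *)
  (forall nabla (alpha beta : 'F_2), is_QLC nabla gmet ->
     nabla (e true) = lact2 (cst alpha) (ee false false) ->
     nabla (e false) = lact2 (cst beta) (ee true true) ->
     (forall s : bool, curvature nabla (e s) = lact1 (cst (alpha * beta)) (e s)) /\
     Ricci true nabla gmet = lact2 (cst (alpha * beta)) (ee false true) /\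
     Ricci false nabla gmet = lact2 (cst (alpha * beta)) (ee true false) /\
     (forall s : bool, Rscalar s nabla gmet = cst (alpha * beta))).
Proof.
split.
  by move=> g; split => [/quantum_metric_gmet | ->] //; exact: gmet_quantum_metric.
split.
  move=> nabla [sigma [sB [nC [tors0 compat]]]].
  exists (nabla (e true) (false, false) 0), (nabla (e false) (true, true) 0).
  by split; apply: (QLC_christoffel sB nC tors0 compat).
split.
  move=> al be; exists (conn_of (christoffel al be)).
  by split; [exact: christoffel_QLC | split; apply: conn_of_e].
split.
  move=> n1 n2 [s1 [_ [C1 _]]] [s2 [_ [C2 _]]]; exact: bimod_conn_eq C1 C2.
move=> nabla al be _ nabla_t nabla_f.
have nabla_e a : nabla (e a) = christoffel al be a by case: a.
split; first exact: christoffel_curvature.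
split; first exact: (christoffel_Ricci nabla_e true).
split; first exact: (christoffel_Ricci nabla_e false).
exact: christoffel_Rscalar.
Qed.
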